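(* Let $0<\eta<1/2$, $0\le\delta<1/2$, and let $p_0>p_1>p_2\ge\ldots\ge p_N$ be reals in $[\eta,1-\eta]$ with $p_0-p_1=p_1-p_2$; set $\Delta_i=p_0-p_i$ and define $\mathbf{p}^0,\ldots,\mathbf{p}^N\in[0,1]^N$ by $\mathbf{p}^0_i=p_i$, and for $j\ge1$, $\mathbf{p}^j_i=p_i$ ($i\ne j$), $\mathbf{p}^j_j=p_0$. Fix a density matrix $\rho$ on $\mathcal{H}_A\otimes\mathcal{H}_R$. Suppose we are given $m$ copies of the state $\mathcal{E}(\rho)$, where it is known that $\mathcal{E}=\mathcal{E}^{\mathbf{p}^k}$ for some unknown $k\in\{0,\ldots,N\}$, and that a measurement on these copies identifies the best arm of $\mathbf{p}^k$ (arm $1$ if $k=0$, arm $k$ if $k\ge1$) with probability at least $1-\delta$ for every $k$. Then $$m\geq\frac{\eta(1-\eta)(1-2\sqrt{\delta(1-\delta)})}{16}H(\mathbf{p}^0).$$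
   Context: $\mathcal{H}_A$ has orthonormal basis $\ket{1},\ldots,\ket{N}$, $\mathcal{H}_R$ is a qubit. For $x\in\{0,1\}^N$, $O_x$ is the unitary with $O_x\ket{i}\ket{c}=\ket{i}\ket{c+x_i\bmod2}$, and for $\mathbf{p}\in[0,1]^N$, $\mathcal{E}^{\mathbf{p}}(\rho)=\sum_{x}\prod_i\mathbf{p}_i^{x_i}(1-\mathbf{p}_i)^{1-x_i}O_x\rho O_x^\dagger$. For $\mathbf{q}$ with unique largest entry $q_{i^*}$, $H(\mathbf{q})=\sum_{i\ne i^*}(q_{i^*}-q_i)^{-2}$; thus $H(\mathbf{p}^0)=\sum_{i=2}^N(p_1-p_i)^{-2}$. *)

From HB Require Import structures.
From mathcomp Require Import all_boot all_order all_algebra.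
From mathcomp Require Import complex.
From mathcomp Require Import reals.
Set Implicit Arguments. Unset Strict Implicit. Unset Printing Implicit Defensive.
Import Order.TTheory GRing.Theory Num.Theory.
Local Open Scope ring_scope.

(* Operators on a finite-dimensional Hilbert space with orthonormal basis indexed
   by a finite type T are represented by their matrix entries A a b = <a|A|b>. *)
Definition op (C : Type) (T : finType) := T -> T -> C.

Section Ops.
Variable C : numClosedFieldType.
Variable T : finType.

Definition mulop (A B : op C T) : op C T := fun a b => \sum_c A a c * B c b.
Definition adjop (A : op C T) : op C T := fun a b => (A b a)^*.
Definition trop (A : op C T) : C := \sum_a A a a.
Definition psd (A : op C T) : Prop :=
  forall v : T -> C, 0 <= \sum_a \sum_b (v a)^* * A a b * v b.
Definition density (A : op C T) : Prop := psd A /\ trop A = 1.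
Definition povm (O : finType) (M : O -> op C T) : Prop :=
  (forall o, psd (M o)) /\ (forall a b, \sum_o M o a b = (a == b)%:R).
(* m-fold tensor power; basis of H^{(x) m} indexed by functions 'I_m -> T *)
Definition tensor_pow (m : nat) (A : op C T) : op C {ffun 'I_m -> T} :=
  fun x y => \prod_(k < m) A (x k) (y k).
End Ops.
Arguments tensor_pow {C T} m A.

(* H_A (x) H_R : basis |i>|c>, i an arm ('I_N, arm i <-> paper's arm i+1), c : bool *)
Definition AR (N : nat) : finType := ('I_N * bool)%type.

Section Channel.
Variable R : realType.
Local Notation C := (complex R).

(* O_x |i>|c> = |i>|c + x_i mod 2> *)
Definition Ox (N : nat) (x : {ffun 'I_N -> bool}) : op C (AR N) :=
  fun a b => ((a.1 == b.1) && (a.2 == addb b.2 (x b.1)))%:R.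

Definition chan (N : nat) (q : 'I_N -> R) (rho : op C (AR N)) : op C (AR N) :=
  fun a b => \sum_(x : {ffun 'I_N -> bool})
     (real_complex R (\prod_i (if x i then q i else 1 - q i))) *
     mulop (mulop (Ox x) rho) (adjop (Ox x)) a b.

(* p : nat -> R gives p_0, p_1, ..., p_N; arm i : 'I_N corresponds to index i+1.
   pvec p k = p^k:  p^k_j = p_j (j <> k), p^k_k = p_0 (k >= 1); p^0_j = p_j. *)
Definition pvec (N : nat) (p : nat -> R) (k : nat) : 'I_N -> R :=
  fun i => if k == i.+1 then p 0%N else p i.+1.
End Channel.
Arguments pvec {R} N p k i.
Arguments chan {R N} q rho a b.

(* Fix a suboptimal arm j.  The instances p^0 and p^(j+1) differ only in the bias of arm j
   (p_(j+1) versus p_0).  Factor rho = V V^* and purify the coin of arm j with one extra bit: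
   both m-copy outputs become Gram matrices of product vectors, whose overlap is gamma^m with
   gamma >= 1 - 2 D w_j, where D is the infidelity of the two coins and w_j the weight of rho
   on arm j.  A measurement identifying the best arm of both instances with probability
   1 - delta forces this overlap below 2 sqrt (delta (1 - delta)) (Cauchy-Schwarz for the two
   POVM elements "answer 1" and "answer not 1"), so Bernoulli's inequality gives
   1 - 2 sqrt (delta (1 - delta)) <= 2 m D w_j.  Since D <= (p_0 - p_(j+1))^2 / (2 eta (1 - eta))
   and p_0 - p_(j+1) <= 2 (p_1 - p_(j+1)) by the equal-gap hypothesis, summing over j with
   sum_j w_j <= 1 yields the bound. *)

From HB Require Import structures.
From mathcomp Require Import all_boot all_order all_algebra.
From mathcomp Require Import complex reals boolp.
From mathcomp Require Import ring lra.
Import Order.TTheory GRing.Theory Num.Theory.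
Local Open Scope ring_scope.
Set Implicit Arguments. Unset Strict Implicit. Unset Printing Implicit Defensive.

Section PsdForm.
Variables (C : numClosedFieldType) (T : finType).
Implicit Types (A : op C T) (v w : T -> C).

Definition braket A v w : C := \sum_a \sum_b (v a)^* * A a b * w b.

Lemma sum_deltal (I : finType) (F : I -> C) i : \sum_t (t == i)%:R * F t = F i.
Proof.
rewrite (bigD1 i) //= eqxx mul1r big1 ?addr0 // => t /negPf ->; exact: mul0r.
Qed.

Lemma sum_deltar (I : finType) (F : I -> C) i : \sum_t F t * (t == i)%:R = F i.
Proof. by under eq_bigr do rewrite mulrC; apply: sum_deltal. Qed.

Lemma braket_deltar A v b : braket A v (fun t => (t == b)%:R) = \sum_a (v a)^* * A a b.
Proof. by apply: eq_bigr => a _; rewrite sum_deltar. Qed.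

Lemma braket_delta A a b :
  braket A (fun t => (t == a)%:R) (fun t => (t == b)%:R) = A a b.
Proof.
rewrite braket_deltar (eq_bigr (fun t => (t == a)%:R * A t b)) ?sum_deltal //.
by move=> t _; rewrite rmorph_nat.
Qed.

Lemma braket_comb A v w x y (u := fun a => x * v a + y * w a) :
  braket A u u = x^* * x * braket A v v + x^* * y * braket A v w
               + y^* * x * braket A w v + y^* * y * braket A w w.
Proof.
rewrite /braket !mulr_sumr -!big_split /=; apply: eq_bigr => a _.
rewrite !mulr_sumr -!big_split /=; apply: eq_bigr => b _.
by rewrite /u rmorphD !rmorphM; ring.
Qed.

Lemma psd_adj A : psd A -> forall a b, A b a = (A a b)^*.
Proof.
move=> psdA a b; set z := A a b; set z' := A b a.
(* polarisation with the test vectors [e_a + e_b] and [e_a + 'i e_b] *)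
have real_diag t : A t t \is Num.real by rewrite -braket_delta; apply/ger0_real/psdA.
have real_comb x y : (x^* * y * z + y^* * x * z')^* = x^* * y * z + y^* * x * z'.
  apply/CrealP.
  have := ger0_real (psdA (fun t => x * (t == a)%:R + y * (t == b)%:R)).
  rewrite -/(braket _ _ _) braket_comb !braket_delta -/z -/z' => hR.
  have -> : x^* * y * z + y^* * x * z' = x^* * x * A a a + x^* * y * z + y^* * x * z'
     + y^* * y * A b b - x^* * x * A a a - y^* * y * A b b.
    by ring.
  have real_sqn c : c^* * c \is Num.real by rewrite mulrC -normCK rpredX ?normr_real.
  by rewrite !rpredB // rpredM ?real_diag.
have sum_eq := real_comb 1 1.
have diff_eq := real_comb 1 'i.
rewrite !(rmorph1, mul1r, mulr1, rmorphD) /= in sum_eq.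
rewrite !(rmorph1, mul1r, mulr1, rmorphD, rmorphM) /= conjCK conjCi in diff_eq.
have {}diff_eq : z - z' = z'^* - z^*.
  apply: (mulfI (neq0Ci C)); transitivity ('i * z + - 'i * z'); first by ring.
  by rewrite -diff_eq; ring.
rewrite -[z']conjCK; congr (_^*); apply: (@mulfI _ 2%:R); first by rewrite pnatr_eq0.
have -> : 2%:R * z'^* = (z^* + z'^*) + (z'^* - z^*) by ring.
by rewrite sum_eq -diff_eq; ring.
Qed.

Lemma braketC A v w : psd A -> braket A w v = (braket A v w)^*.
Proof.
move=> psdA; rewrite /braket exchange_big rmorph_sum; apply: eq_bigr => a _.
rewrite rmorph_sum; apply: eq_bigr => b _.
by rewrite !rmorphM /= conjCK (psd_adj psdA a b); ring.
Qed.

Lemma psd_CauchySchwarz A v w :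
  psd A -> `|braket A v w| ^+ 2 <= braket A v v * braket A w w.
Proof.
move=> psdA; set z := braket A v w; set a := braket A v v; set b := braket A w w.
have a_ge0 : 0 <= a by apply: psdA.
have b_ge0 : 0 <= b by apply: psdA.
have key x y : 0 <= x^* * x * a + x^* * y * z + y^* * x * z^* + y^* * y * b.
  by rewrite -(braketC _ _ psdA) -braket_comb; apply: psdA.
rewrite normCK; have [b0 | b_neq0] := eqVneq b 0.
  rewrite b0 mulr0; have [-> | z_neq0] := eqVneq z 0; first by rewrite mul0r.
  (* with [x = 1] and [y = - (a + 1) / z] the form would be [- (a + 2) < 0] *)
  have yz : - (a + 1) / z * z = - (a + 1) by rewrite divfK.
  have yz' : (- (a + 1) / z)^* * z^* = - (a + 1).
    by rewrite -rmorphM yz rmorphN rmorphD rmorph1 /= geC0_conj.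
  have := key 1 (- (a + 1) / z); rewrite b0 mulr0 addr0 rmorph1 !mul1r yz mulr1 yz'.
  have -> : a + - (a + 1) + - (a + 1) = - (a + 2%:R) by ring.
  rewrite oppr_ge0 => a2_le0.
  by have := lt_le_trans (ltr_wpDl a_ge0 (ltr0Sn _ 1)) a2_le0; rewrite ltxx.
have := key b (- z^*); rewrite geC0_conj // rmorphN /= conjCK.
have -> : b * b * a + b * - z^* * z + - z * b * z^* + - z * - z^* * b =
  b * (a * b - z * z^*) by ring.
by rewrite pmulr_rge0 ?lt_def ?b_neq0 // subr_ge0.
Qed.

Lemma psd_row0 A s : psd A -> A s s = 0 -> forall b, A s b = 0.
Proof.
move=> psdA Ass0 b.
have := psd_CauchySchwarz (fun t => (t == s)%:R) (fun t => (t == b)%:R) psdA.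
rewrite !braket_delta Ass0 mul0r => sq_le0.
have /eqP : `|A s b| ^+ 2 = 0 by apply/eqP; rewrite eq_le sq_le0 exprn_ge0.
by rewrite expf_eq0 normr_eq0 => /eqP.
Qed.

Definition gram (F : finType) (V : T -> F -> C) : op C T :=
  fun a b => \sum_f V a f * (V b f)^*.

Definition schur A s : op C T := fun a b => A a b - A a s * A s b / A s s.

Lemma braket_schur A s v : psd A ->
  braket (schur A s) v v = braket A v v - `|braket A v (fun t => (t == s)%:R)| ^+ 2 / A s s.
Proof.
move=> psdA; rewrite normCK braket_deltar.
have -> : (\sum_a (v a)^* * A a s)^* = \sum_b A s b * v b.
  rewrite rmorph_sum; apply: eq_bigr => b _.
  by rewrite rmorphM /= conjCK -(psd_adj psdA) mulrC.
rewrite /braket /schur mulr_suml mulr_suml -sumrB; apply: eq_bigr => a _.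
rewrite mulr_sumr mulr_suml -sumrB; apply: eq_bigr => b _; ring.
Qed.

Lemma psd_schur A s : psd A -> psd (schur A s).
Proof.
move=> psdA v; rewrite -/(braket _ _ _) braket_schur // subr_ge0.
have [-> | Ass_neq0] := eqVneq (A s s) 0; first by rewrite invr0 mulr0; apply: psdA.
have Ass_gt0 : 0 < A s s by rewrite lt_def Ass_neq0 -braket_delta; apply: psdA.
rewrite ler_pdivrMr //; have := psd_CauchySchwarz v (fun t => (t == s)%:R) psdA.
by rewrite braket_delta.
Qed.

Lemma schur_row0 A s : psd A -> forall b, schur A s s b = 0.
Proof.
move=> psdA b; rewrite /schur; have [Ass0 | Ass_neq0] := eqVneq (A s s) 0.
  by rewrite (psd_row0 psdA Ass0) !(mulr0, mul0r) subrr.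
by rewrite mulrAC divff // mul1r subrr.
Qed.

Lemma schur_decomp A s (u := fun a => A a s / sqrtC (A s s)) : psd A ->
  forall a b, A a b = schur A s a b + u a * (u b)^*.
Proof.
move=> psdA a b; have Ass_ge0 : 0 <= A s s by rewrite -braket_delta; apply: psdA.
rewrite /schur /u rmorphM /= fmorphV /= (@geC0_conj _ (sqrtC _)) ?sqrtC_ge0 //.
by rewrite -(psd_adj psdA) -{1}[A s s]sqrtCK expr2 invfM; ring.
Qed.

Lemma psd_gram_on n (S : {set T}) A : #|S| = n -> psd A ->
  (forall a b, a \notin S -> A a b = 0) ->
  exists2 V : T -> T -> C,
    forall a b, A a b = gram V a b & forall a r, r \notin S -> V a r = 0.
Proof.
elim: n S A => [|n IHn] S A cardS psdA A_on.
  exists (fun _ _ => 0) => // a b; rewrite /gram big1 => [|r _]; last by rewrite mul0r.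
  by apply: A_on; move/eqP: cardS; rewrite cards_eq0 => /eqP ->; rewrite inE.
have [s sS] : {s | s \in S}.
  by apply/sigW/set0Pn; rewrite -card_gt0 cardS.
have cardSs : #|S :\ s| = n by move: cardS; rewrite (cardsD1 s) sS add1n => -[].
have schur_on a b : a \notin S :\ s -> schur A s a b = 0.
  rewrite !inE negb_and negbK => /orP[/eqP-> | aS]; first exact: schur_row0.
  by rewrite /schur !(A_on a) // !mul0r subrr.
have [V' A'E V'_on] := IHn _ _ cardSs (psd_schur s psdA) schur_on.
exists (fun a r => if r == s then A a s / sqrtC (A s s) else V' a r) => [a b | a r rS].
  rewrite (schur_decomp s psdA) A'E /gram [RHS](bigD1 s) //= eqxx addrC; congr (_ + _).
  rewrite [LHS](bigD1 s) //= !V'_on ?(inE, eqxx) // mul0r add0r.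
  by apply: eq_bigr => r /negPf ->.
have /negPf -> : r != s by apply: contraNneq rS => ->.
by apply: V'_on; rewrite !inE negb_and rS orbT.
Qed.

Lemma psd_gram A : psd A -> exists V : T -> T -> C, A = gram V.
Proof.
move=> psdA; have A_on a b : a \notin [set: T] -> A a b = 0 by rewrite inE.
have [V AE _] := psd_gram_on (erefl #|[set: T]|) psdA A_on.
by exists V; apply/funext => a; apply/funext => b; apply: AE.
Qed.
End PsdForm.

Section GramTensor.
Variable C : numClosedFieldType.

Lemma sum_pair (X G : finType) (F : (X * G)%type -> C) :
  \sum_p F p = \sum_x \sum_g F (x, g).
Proof. by rewrite pair_bigA; apply: eq_bigr => -[]. Qed.

Definition dotv (T : finType) (v w : T -> C) : C := \sum_t (v t)^* * w t.

Definition tensor_vec (T F : finType) m (psi : T -> F -> C)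
    (x : {ffun 'I_m -> T}) (g : {ffun 'I_m -> F}) : C :=
  \prod_k psi (x k) (g k).
Arguments tensor_vec {T F} m psi x g.

Definition ampl (X G : finType) (M : op C X) : op C (X * G)%type :=
  fun p q => (p.2 == q.2)%:R * M p.1 q.1.
Arguments ampl {X} G M.

Lemma tensor_pow_gram (T F : finType) m (psi : T -> F -> C) :
  tensor_pow m (gram psi) = gram (tensor_vec m psi).
Proof.
apply/funext => x; apply/funext => y.
rewrite /tensor_pow /gram bigA_distr_bigA /=; apply: eq_bigr => g _.
by rewrite rmorph_prod -big_split.
Qed.

Lemma dotv_tensor_vec (T F : finType) m (psa psb : T -> F -> C) :
  dotv (uncurry (tensor_vec m psa)) (uncurry (tensor_vec m psb)) =
  dotv (uncurry psa) (uncurry psb) ^+ m.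
Proof.
rewrite /dotv -[in RHS](card_ord m) -prodr_const !sum_pair bigA_distr_bigA /=.
apply: eq_bigr => x _; rewrite bigA_distr_bigA /=; apply: eq_bigr => g _.
by rewrite rmorph_prod -big_split.
Qed.

Lemma braket_ampl (X G : finType) (M : op C X) (v w : (X * G)%type -> C) :
  braket (ampl G M) v w = \sum_g braket M (fun x => v (x, g)) (fun x => w (x, g)).
Proof.
rewrite /braket sum_pair exchange_big /=; apply: eq_bigr => g _; apply: eq_bigr => x _.
rewrite sum_pair /=; apply: eq_bigr => y _.
rewrite -(sum_deltal (fun h => (v (x, g))^* * M x y * w (y, h)) g).
by apply: eq_bigr => h _; rewrite /ampl /= eq_sym; ring.
Qed.

Lemma psd_ampl (X G : finType) (M : op C X) : psd M -> psd (ampl G M).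
Proof.
move=> psdM v; rewrite -/(braket _ v v) braket_ampl.
by apply: sumr_ge0 => g _; apply: psdM.
Qed.

Lemma trop_mul_gram (T F : finType) (M : op C T) (psi : T -> F -> C) :
  trop (mulop M (gram psi)) = braket (ampl F M) (uncurry psi) (uncurry psi).
Proof.
rewrite braket_ampl /trop /mulop /gram /braket /=.
under eq_bigr => a _ do under eq_bigr => c _ do rewrite mulr_sumr.
under eq_bigr => a _ do rewrite exchange_big.
rewrite exchange_big; apply: eq_bigr => f _; apply: eq_bigr => a _.
by apply: eq_bigr => c _; ring.
Qed.

Lemma braket_sum (T I : finType) (P : pred I) (M : I -> op C T) v w :
  braket (fun a b => \sum_(i | P i) M i a b) v w = \sum_(i | P i) braket (M i) v w.
Proof.
rewrite /braket [RHS]exchange_big; apply: eq_bigr => a _.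
rewrite [RHS]exchange_big; apply: eq_bigr => b _.
by rewrite mulr_sumr mulr_suml.
Qed.

Lemma psd_sum (T I : finType) (P : pred I) (M : I -> op C T) :
  (forall i, P i -> psd (M i)) -> psd (fun a b => \sum_(i | P i) M i a b).
Proof.
move=> psdM v; rewrite -/(braket _ v v) braket_sum.
by apply: sumr_ge0 => i Pi; apply: psdM.
Qed.

Lemma braketD (T : finType) (P Q : op C T) v w :
  braket (fun a b => P a b + Q a b) v w = braket P v w + braket Q v w.
Proof.
rewrite /braket -big_split; apply: eq_bigr => a _.
by rewrite -big_split; apply: eq_bigr => b _ /=; ring.
Qed.

Lemma braket_idop (T : finType) (A : op C T) v w :
  (forall a b, A a b = (a == b)%:R) -> braket A v w = dotv v w.
Proof.
move=> A1; apply: eq_bigr => a _.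
by under eq_bigr => b _ do rewrite A1 eq_sym mulrAC; rewrite sum_deltar.
Qed.
End GramTensor.
Arguments tensor_vec {C T F} m psi x g.
Arguments ampl {C X} G M.

Section RealBounds.
Variable R : rcfType.

(* [infidelity ta tb = 1 - (sqrt (ta tb) + sqrt ((1 - ta) (1 - tb)))^2], one minus the
   fidelity of the coins of biases [ta] and [tb]. *)
Definition infidelity (ta tb : R) : R :=
  (Num.sqrt (ta * (1 - tb)) - Num.sqrt (tb * (1 - ta))) ^+ 2.

Lemma infidelity_ge0 ta tb : 0 <= infidelity ta tb.
Proof. exact: sqr_ge0. Qed.

Lemma infidelityii t : infidelity t t = 0.
Proof. by rewrite /infidelity subrr expr0n. Qed.

Lemma infidelityE ta tb : 0 <= ta <= 1 -> 0 <= tb <= 1 ->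
  infidelity ta tb = (1 - ta) * tb + ta * (1 - tb)
                     - 2 * (Num.sqrt (ta * (1 - ta)) * Num.sqrt (tb * (1 - tb))).
Proof.
move=> /andP[ta0 ta1] /andP[tb0 tb1].
have [ab_ge0 ba_ge0] : 0 <= ta * (1 - tb) /\ 0 <= tb * (1 - ta).
  by split; rewrite mulr_ge0 ?subr_ge0.
have -> : Num.sqrt (ta * (1 - ta)) * Num.sqrt (tb * (1 - tb)) =
          Num.sqrt (ta * (1 - tb)) * Num.sqrt (tb * (1 - ta)).
  by rewrite -!sqrtrM ?mulr_ge0 ?subr_ge0 //; congr Num.sqrt; ring.
by rewrite /infidelity sqrrB !sqr_sqrtr //; ring.
Qed.

Lemma infidelity_le eta ta tb : 0 < eta ->
  eta <= ta <= 1 - eta -> eta <= tb <= 1 - eta ->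
  infidelity ta tb * (2 * (eta * (1 - eta))) <= (ta - tb) ^+ 2.
Proof.
move=> eta_gt0 /andP[ta_ge ta_le] /andP[tb_ge tb_le].
set x := Num.sqrt (ta * (1 - tb)); set y := Num.sqrt (tb * (1 - ta)).
have [x_ge0 y_ge0] : 0 <= x /\ 0 <= y by split; apply: sqrtr_ge0.
have x2 : x ^+ 2 = ta * (1 - tb) by rewrite sqr_sqrtr //; apply: mulr_ge0; lra.
have y2 : y ^+ 2 = tb * (1 - ta) by rewrite sqr_sqrtr //; apply: mulr_ge0; lra.
(* [(x - y) (x + y) = x^2 - y^2 = ta - tb] and [(x + y)^2 >= x^2 + y^2 >= 2 eta (1 - eta)] *)
have diff_sq : (x - y) ^+ 2 * (x + y) ^+ 2 = (ta - tb) ^+ 2.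
  have -> : (x - y) ^+ 2 * (x + y) ^+ 2 = (x ^+ 2 - y ^+ 2) ^+ 2 by ring.
  by rewrite x2 y2; ring.
have sum_sq : 2 * (eta * (1 - eta)) <= (x + y) ^+ 2.
  have : 2 * (eta * (1 - eta)) <= x ^+ 2 + y ^+ 2 by rewrite x2 y2; nra.
  by rewrite sqrrD; have := mulr_ge0 x_ge0 y_ge0; lra.
by rewrite /infidelity -/x -/y -diff_sq ler_wpM2l ?sqr_ge0.
Qed.

Lemma two_state_overlap (pa pb qa qb za zb del : R) :
  0 <= del <= 1 / 2 ->
  0 <= pa -> 0 <= pb -> 0 <= qa -> 0 <= qb -> 0 <= za -> 0 <= zb ->
  pa + qa = 1 -> pb + qb = 1 -> 1 - del <= pa -> 1 - del <= qb ->
  za ^+ 2 <= pa * pb -> zb ^+ 2 <= qa * qb ->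
  za + zb <= 2 * Num.sqrt (del * (1 - del)).
Proof.
move=> /andP[del0 del1] pa0 pb0 qa0 qb0 za0 zb0 sa sb pa_ge qb_ge za_le zb_le.
have sq_le (u v : R) : 0 <= u -> 0 <= v -> u ^+ 2 <= v ^+ 2 -> u <= v.
  by move=> u0 v0; rewrite ler_pXn2r ?nnegrE.
set A := Num.sqrt pa; set B := Num.sqrt pb; set A' := Num.sqrt qa; set B' := Num.sqrt qb.
have [A0 B0 A'0 B'0] : [/\ 0 <= A, 0 <= B, 0 <= A' & 0 <= B'] by split; apply: sqrtr_ge0.
have [A2 B2 A'2 B'2] : [/\ A ^+ 2 = pa, B ^+ 2 = pb, A' ^+ 2 = qa & B' ^+ 2 = qb].
  by split; apply: sqr_sqrtr.
have za_le' : za <= A * B by apply: sq_le; rewrite ?mulr_ge0 // exprMn A2 B2.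
have zb_le' : zb <= A' * B' by apply: sq_le; rewrite ?mulr_ge0 // exprMn A'2 B'2.
(* the 2x2 matrix [[A, A'], [B, B']] has orthonormal columns, so its "cos" [A B + A' B']
   is small once its "sin" [A B' - A' B] is close to 1 *)
have sin_ge : 1 - 2 * del <= A * B' - A' * B.
  have AB'_ge : 1 - del <= A * B'.
    apply: sq_le; rewrite ?mulr_ge0 ?subr_ge0 //; first lra.
    rewrite exprMn A2 B'2; have : 0 <= 1 - del by lra.
    nra.
  have A'B_le : A' * B <= del.
    apply: sq_le; rewrite ?mulr_ge0 // exprMn A'2 B2.
    have : qa <= del by lra.
    have : pb <= del by lra.
    nra.
  lra.
have unit : (A * B + A' * B') ^+ 2 + (A * B' - A' * B) ^+ 2 = 1.
  transitivity ((A ^+ 2 + A' ^+ 2) * (B ^+ 2 + B' ^+ 2)); first by ring.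
  by rewrite A2 A'2 B2 B'2 sa sb mulr1.
set c := Num.sqrt (del * (1 - del)).
have c2 : c ^+ 2 = del * (1 - del) by rewrite sqr_sqrtr //; apply: mulr_ge0; lra.
have cos_le : A * B + A' * B' <= 2 * c.
  apply: sq_le; rewrite ?addr_ge0 ?mulr_ge0 ?sqrtr_ge0 // exprMn c2.
  have : (1 - 2 * del) ^+ 2 <= (A * B' - A' * B) ^+ 2.
    by rewrite lerXn2r ?nnegrE //; lra.
  by move: unit; nra.
lra.
Qed.

Lemma exprn_norm_ge (g x : R) m : 1 - x <= g -> 0 <= x -> 1 - m%:R * x <= `|g| ^+ m.
Proof.
move=> g_ge x_ge0; have [x_le1 | x_gt1] := lerP x 1.
  have bernoulli k : 1 - k%:R * x <= (1 - x) ^+ k.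
    elim: k => [|k IHk]; first by rewrite mul0r subr0 expr0.
    rewrite exprS -natr1; have : 0 <= (1 - x) ^+ k by rewrite exprn_ge0 // subr_ge0.
    have : 0 <= k%:R * x ^+ 2 :> R by rewrite mulr_ge0 ?ler0n ?sqr_ge0.
    by nra.
  apply: le_trans (bernoulli m) _; rewrite lerXn2r ?nnegrE ?subr_ge0 //.
  by apply: le_trans g_ge _; apply: ler_norm.
case: m => [|m]; first by rewrite mul0r subr0 expr0.
apply: le_trans (exprn_ge0 _ (normr_ge0 g)).
have : 1 <= m.+1%:R :> R by rewrite ler1n.
nra.
Qed.
End RealBounds.

Section Channel.
Variables (R : realType) (N : nat).
Local Notation C := (complex R).
Local Notation "x %:C" := (real_complex R x).
Local Notation T := (AR N).
Local Notation X := {ffun 'I_N -> bool}.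
Implicit Types (q : 'I_N -> R) (rho : op C T) (x : X).

Lemma conj_real (r : R) : r%:C^* = r%:C.
Proof. by apply/CrealP; rewrite realE !lecR -realE num_real. Qed.

Lemma norm_real (r : R) : `|r%:C| = `|r|%:C.
Proof. by rewrite normc_def /= expr0n addr0 sqrtr_sqr. Qed.

Definition sqn (z : C) : R := complex.Re z ^+ 2 + complex.Im z ^+ 2.

Lemma sqnE (z : C) : z^* * z = (sqn z)%:C.
Proof.
case: z => a b; apply/eqP; rewrite eq_complex /sqn /=.
by apply/andP; split; apply/eqP; ring.
Qed.

Lemma trop_gram (V : T -> T -> C) : trop (gram V) = (\sum_r \sum_s sqn (V s r))%:C.
Proof.
rewrite exchange_big rmorph_sum; apply: eq_bigr => s _.
by rewrite rmorph_sum; apply: eq_bigr => r _; rewrite mulrC sqnE.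
Qed.

Lemma sqn_ge0 (z : C) : 0 <= sqn z.
Proof. by rewrite addr_ge0 ?sqr_ge0. Qed.

Lemma sqnN (z : C) : sqn (- z) = sqn z.
Proof. by case: z => a b; rewrite /sqn /= !sqrrN. Qed.

Lemma sqnB_le (a b : C) : sqn (a - b) <= 2 * (sqn a + sqn b).
Proof.
case: a b => a1 a2 [b1 b2]; rewrite /sqn /=.
by have := sqr_ge0 (a1 + b1); have := sqr_ge0 (a2 + b2); nra.
Qed.

Definition flip x (s : T) : T := (s.1, s.2 (+) x s.1).

Lemma flipK x : involutive (flip x).
Proof. by case=> i c; rewrite /flip /= addbK. Qed.

Lemma Ox_entry x a b : Ox R x a b = (b == flip x a)%:R.
Proof.
case: a b => i c [i' c']; rewrite /Ox /flip /= !xpair_eqE eq_sym.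
by case: eqP => [-> | _] //=; case: c; case: c'; case: (x i).
Qed.

Lemma conj_Ox x rho a b :
  mulop (mulop (Ox R x) rho) (adjop (Ox R x)) a b = rho (flip x a) (flip x b).
Proof.
rewrite /mulop /adjop.
under eq_bigr => c _ do under eq_bigr => e _ do rewrite Ox_entry.
under eq_bigr => c _ do rewrite sum_deltal Ox_entry rmorph_nat.
by rewrite sum_deltar.
Qed.

Definition weight q x : R := \prod_i (if x i then q i else 1 - q i).

Lemma weight_ge0 q x : (forall i, 0 <= q i <= 1) -> 0 <= weight q x.
Proof.
move=> q01; apply: prodr_ge0 => i _; have /andP[q0 q1] := q01 i.
by case: (x i); rewrite ?subr_ge0.
Qed.

Lemma weight_sum q : \sum_x weight q x = 1.
Proof.
rewrite /weight -(bigA_distr_bigA (fun i (b : bool) => if b then q i else 1 - q i)) /=.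
by rewrite big1 // => i _; rewrite big_bool /= addrC subrK.
Qed.

Lemma chan_entry q rho a b :
  chan q rho a b = \sum_x (weight q x)%:C * rho (flip x a) (flip x b).
Proof. by apply: eq_bigr => x _; rewrite conj_Ox. Qed.

Variables (j : 'I_N) (q : 'I_N -> R).

Definition upd t : 'I_N -> R := fun i => if i == j then t else q i.
Definition toggle x : X := [ffun i => if i == j then ~~ x i else x i].
Definition flip_arm (s : T) : T := if s.1 == j then (s.1, ~~ s.2) else s.

Lemma toggleK : involutive toggle.
Proof. by move=> x; apply/ffunP => i; rewrite !ffunE; case: eqP; rewrite ?negbK. Qed.

Lemma flip_toggle x s : flip (toggle x) s = flip x (flip_arm s).
Proof.
case: s => i c; rewrite /flip /flip_arm /= ffunE.
by case: eqP => [-> | _] //=; rewrite addbN addNb.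
Qed.

Lemma weight_upd t x :
  weight (upd t) x = (1 - t) * weight (upd 0) x + t * weight (upd 0) (toggle x).
Proof.
pose off_arm y := \prod_(i | i != j) (if y i then q i else 1 - q i).
have weightE t' y : weight (upd t') y = (if y j then t' else 1 - t') * off_arm y.
  rewrite /weight (bigD1 j) //= /upd eqxx; congr (_ * _).
  by apply: eq_bigr => i /negPf ->.
have off_arm_toggle : off_arm (toggle x) = off_arm x.
  by apply: eq_bigr => i /negPf ij; rewrite ffunE ij.
by rewrite !weightE off_arm_toggle ffunE eqxx; case: (x j) => /=; ring.
Qed.

Lemma chan_upd t rho a b : chan (upd t) rho a b =
  \sum_x (weight (upd 0) x)%:C * ((1 - t%:C) * rho (flip x a) (flip x b) +
                                  t%:C * rho (flip x (flip_arm a)) (flip x (flip_arm b))).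
Proof.
rewrite chan_entry.
under eq_bigr => x _ do rewrite weight_upd rmorphD !rmorphM rmorphB rmorph1 mulrDl.
under [in RHS]eq_bigr => x _ do rewrite mulrDr.
rewrite !big_split /=; congr (_ + _); first by apply: eq_bigr => x _; ring.
rewrite (reindex_inj (inv_inj toggleK)) /=; apply: eq_bigr => x _.
by rewrite toggleK !flip_toggle; ring.
Qed.

(* A one-bit purification of [u u^* |-> (1 - t) u u^* + t (u \o flip_arm) (u \o flip_arm)^*]:
   on arm [j], the bit [e = true] carries [sqrt (t (1 - t)) (u \o flip_arm - u)], what the
   average [(1 - t) u + t (u \o flip_arm)] misses of the mixture. *)
Definition purif (u : T -> C) t (s : T) (e : bool) : C :=
  if s.1 != j then (if e then 0 else u s)
  else if e then (Num.sqrt (t * (1 - t)))%:C * (u (flip_arm s) - u s)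
  else (1 - t%:C) * u s + t%:C * u (flip_arm s).

Lemma gram_purif u t : 0 <= t <= 1 -> forall a b,
  gram (purif u t) a b =
  (1 - t%:C) * (u a * (u b)^*) + t%:C * (u (flip_arm a) * (u (flip_arm b))^*).
Proof.
move=> /andP[t0 t1] a b; set c := (Num.sqrt (t * (1 - t)))%:C.
have c2 : c * c = t%:C * (1 - t%:C).
  by rewrite -rmorphM -expr2 sqr_sqrtr ?mulr_ge0 ?subr_ge0 // rmorphM rmorphB rmorph1.
rewrite /gram big_bool /purif /flip_arm.
case: (a.1 == j); case: (b.1 == j);
  rewrite /= !(rmorph0, rmorph1, rmorphD, rmorphN, rmorphB, rmorphM, mulr0, add0r) /=
          ?conj_real //; try ring.
by rewrite -/c [c * _ * (c * _)]mulrACA c2; ring.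
Qed.

Lemma dotv_purif u ta tb : 0 <= ta <= 1 -> 0 <= tb <= 1 ->
  dotv (uncurry (purif u ta)) (uncurry (purif u tb)) =
  (\sum_s sqn (u s) - infidelity ta tb * sqn (u (j, false) - u (j, true)))%:C.
Proof.
move=> ta01 tb01; rewrite infidelityE // rmorphB rmorph_sum rmorphM /= -sqnE.
under [in RHS]eq_bigr => s _ do rewrite -sqnE.
rewrite /dotv !sum_pair (bigD1 j) //= [in RHS](bigD1 j) //= [in RHS]addrAC.
congr (_ + _); last first.
  apply: eq_bigr => i ij; apply: eq_bigr => c _.
  by rewrite big_bool /purif /= ij rmorph0 mul0r add0r.
rewrite !big_bool /purif /flip_arm /= eqxx /=.
rewrite !(rmorphB, rmorphD, rmorphM, rmorph_nat, rmorph0, rmorph1) /= !conj_real.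
by ring.
Qed.

Hypothesis q01 : forall i, 0 <= q i <= 1.

Lemma weight_upd0_ge0 x : 0 <= weight (upd 0) x.
Proof. by apply: weight_ge0 => i; rewrite /upd; case: eqP; rewrite ?lexx ?ler01. Qed.

Lemma sqrt_weight x :
  (Num.sqrt (weight (upd 0) x))%:C * (Num.sqrt (weight (upd 0) x))%:C = (weight (upd 0) x)%:C.
Proof. by rewrite -rmorphM -expr2 sqr_sqrtr ?weight_upd0_ge0. Qed.

(* The ancilla [(x, r, e)] holds the flip pattern [x] drawn with arm [j] frozen (its flip
   is carried by the bit [e] of [purif]) and the column [r] of a factorisation [gram V]. *)
Definition psi (V : T -> T -> C) t (s : T) (f : (X * T * bool)%type) : C :=
  (Num.sqrt (weight (upd 0) f.1.1))%:C * purif (fun s' => V (flip f.1.1 s') f.1.2) t s f.2.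

Lemma chan_upd_gram V t : 0 <= t <= 1 -> chan (upd t) (gram V) = gram (psi V t).
Proof.
move=> t01; apply/funext => a; apply/funext => b.
rewrite chan_upd /gram !sum_pair; apply: eq_bigr => x _.
transitivity (\sum_r (weight (upd 0) x)%:C *
                gram (purif (fun s => V (flip x s) r) t) a b); last first.
  apply: eq_bigr => r _; rewrite /gram mulr_sumr; apply: eq_bigr => e _.
  by rewrite /psi /= rmorphM /= conj_real -sqrt_weight; ring.
rewrite -mulr_sumr; congr (_ * _).
under [RHS]eq_bigr => r _ do rewrite gram_purif //.
by rewrite big_split /= -!mulr_sumr.
Qed.

Definition arm_spread (V : T -> T -> C) : R := \sum_r sqn (V (j, false) r - V (j, true) r).

Lemma dotv_psi V ta tb : 0 <= ta <= 1 -> 0 <= tb <= 1 ->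
  \sum_r \sum_s sqn (V s r) = 1 ->
  dotv (uncurry (psi V ta)) (uncurry (psi V tb)) = (1 - infidelity ta tb * arm_spread V)%:C.
Proof.
move=> ta01 tb01 V1.
rewrite /dotv sum_pair exchange_big /= !sum_pair /=.
have -> : 1 - infidelity ta tb * arm_spread V = \sum_x weight (upd 0) x *
    \sum_r (\sum_s sqn (V s r) - infidelity ta tb * sqn (V (j, false) r - V (j, true) r)).
  by rewrite -mulr_suml weight_sum mul1r sumrB V1 -mulr_sumr.
rewrite rmorph_sum; apply: eq_bigr => x _.
rewrite mulr_sumr rmorph_sum; apply: eq_bigr => r _.
transitivity ((weight (upd 0) x)%:C *
  dotv (uncurry (purif (fun s => V (flip x s) r) ta))
       (uncurry (purif (fun s => V (flip x s) r) tb))).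
  rewrite /dotv sum_pair exchange_big mulr_sumr; apply: eq_bigr => e _.
  rewrite mulr_sumr; apply: eq_bigr => s _.
  by rewrite /psi /= rmorphM /= conj_real -sqrt_weight; ring.
rewrite dotv_purif // -rmorphM; congr (_ * (_ - _ * _))%:C.
  by rewrite (reindex_inj (inv_inj (flipK x))) /=; apply: eq_bigr => s _; rewrite flipK.
by rewrite /flip /=; case: (x j) => //=; rewrite -sqnN opprB.
Qed.

Definition arm_weight (V : T -> T -> C) : R := \sum_r \sum_c sqn (V (j, c) r).

Lemma arm_weight_ge0 V : 0 <= arm_weight V.
Proof. by apply: sumr_ge0 => r _; apply: sumr_ge0 => c _; apply: sqn_ge0. Qed.

Lemma arm_spread_le V : arm_spread V <= 2 * arm_weight V.
Proof.
rewrite /arm_spread /arm_weight mulr_sumr; apply: ler_sum => r _.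
by rewrite big_bool /= addrC; apply: sqnB_le.
Qed.
End Channel.

Section Discrimination.
Variables (R : rcfType) (X : finType).
Local Notation C := (complex R).
Local Notation "x %:C" := (real_complex R x).

Lemma complex_ge0P (z : C) : 0 <= z -> exists2 r : R, 0 <= r & z = r%:C.
Proof. by case: z => a b; rewrite lecE /= => /andP[/eqP -> a0]; exists a. Qed.

Lemma povm2_overlap (P Q : op C X) (u v : X -> C) del :
  psd P -> psd Q -> (forall a b, P a b + Q a b = (a == b)%:R) ->
  dotv u u = 1 -> dotv v v = 1 -> 0 <= del <= 1 / 2 ->
  (1 - del)%:C <= braket P u u -> (1 - del)%:C <= braket Q v v ->
  `|dotv u v| <= (2 * Num.sqrt (del * (1 - del)))%:C.
Proof.
move=> psdP psdQ PQ1 u1 v1 del01 Pu Qv.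
have PQ_dotv w w' : braket P w w' + braket Q w w' = dotv w w'.
  by rewrite -braketD; apply: braket_idop.
have tri : `|dotv u v| <= `|braket P u v| + `|braket Q u v|.
  by rewrite -PQ_dotv ler_normD.
have CSP := psd_CauchySchwarz u v psdP; have CSQ := psd_CauchySchwarz u v psdQ.
have sa := PQ_dotv u u; have sb := PQ_dotv v v; rewrite ?u1 ?v1 in sa sb.
have psd_braket (A : op C X) w : psd A -> 0 <= braket A w w by apply.
have [pa pa0 paE] := complex_ge0P (psd_braket _ u psdP).
have [pb pb0 pbE] := complex_ge0P (psd_braket _ v psdP).
have [qa qa0 qaE] := complex_ge0P (psd_braket _ u psdQ).
have [qb qb0 qbE] := complex_ge0P (psd_braket _ v psdQ).
have [za za0 zaE] := complex_ge0P (normr_ge0 (braket P u v)).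
have [zb zb0 zbE] := complex_ge0P (normr_ge0 (braket Q u v)).
rewrite paE qaE in sa; rewrite pbE qbE in sb.
rewrite zaE paE pbE -!rmorphXn -!rmorphM lecR in CSP.
rewrite zbE qaE qbE -!rmorphXn -!rmorphM lecR in CSQ.
rewrite paE lecR in Pu; rewrite qbE lecR in Qv.
apply: (le_trans tri); rewrite zaE zbE -rmorphD lecR.
apply: (two_state_overlap del01 pa0 pb0 qa0 qb0 za0 zb0) => //;
  by apply: complexI; rewrite rmorphD rmorph1.
Qed.
End Discrimination.

Section ArmBound.
Variables (R : realType) (N m : nat).
Local Notation C := (complex R).
Local Notation "x %:C" := (real_complex R x).
Local Notation T := (AR N).
Local Notation G := {ffun 'I_m -> ({ffun 'I_N -> bool} * T * bool)%type}.
Variables (i0 j : 'I_N) (q : 'I_N -> R) (V : T -> T -> C) (M : 'I_N -> op C {ffun 'I_m -> T}).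
Variables (ta tb del : R).
Hypotheses (j_neq_i0 : j != i0) (q01 : forall i, 0 <= q i <= 1)
  (ta01 : 0 <= ta <= 1) (tb01 : 0 <= tb <= 1) (V1 : \sum_r \sum_s sqn (V s r) = 1)
  (povmM : povm M) (del01 : 0 <= del <= 1 / 2).

Let state t := uncurry (tensor_vec m (psi j q V t)).

Lemma trop_state t o : 0 <= t <= 1 ->
  trop (mulop (M o) (tensor_pow m (chan (upd j q t) (gram V)))) =
  braket (ampl G (M o)) (state t) (state t).
Proof. by move=> t01; rewrite chan_upd_gram // tensor_pow_gram trop_mul_gram. Qed.

Lemma dotv_state :
  dotv (state ta) (state tb) = ((1 - infidelity ta tb * arm_spread j V) ^+ m)%:C.
Proof. by rewrite dotv_tensor_vec dotv_psi // rmorphXn. Qed.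

Lemma dotv_state_same t : 0 <= t <= 1 -> dotv (state t) (state t) = 1.
Proof. by move=> t01; rewrite dotv_tensor_vec dotv_psi // infidelityii mul0r subr0 expr1n. Qed.

Hypotheses
  (succ_a : (1 - del)%:C <= trop (mulop (M i0) (tensor_pow m (chan (upd j q ta) (gram V)))))
  (succ_b : (1 - del)%:C <= trop (mulop (M j) (tensor_pow m (chan (upd j q tb) (gram V))))).

Lemma arm_bound :
  1 - 2 * Num.sqrt (del * (1 - del)) <= m%:R * (2 * infidelity ta tb * arm_weight j V).
Proof.
have [psdM M1] := povmM.
pose Q := fun p p' => \sum_(o | o != i0) ampl G (M o) p p'.
have psdQ : psd Q by apply: psd_sum => o _; apply: psd_ampl.
have PQ1 p p' : ampl G (M i0) p p' + Q p p' = (p == p')%:R.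
  rewrite /Q -(bigD1 i0 (P := predT)) //= /ampl -mulr_sumr M1 -natrM.
  by case: p p' => x g [x' g'] /=; rewrite xpair_eqE mulnb andbC.
have succ_b' : (1 - del)%:C <= braket Q (state tb) (state tb).
  apply: (le_trans succ_b); rewrite trop_state // braket_sum (bigD1 j) //= lerDl.
  by apply: sumr_ge0 => o _; apply: (psd_ampl (psdM o)).
have succ_a' : (1 - del)%:C <= braket (ampl G (M i0)) (state ta) (state ta).
  by rewrite -trop_state.
have := povm2_overlap (psd_ampl (psdM i0)) psdQ PQ1 (dotv_state_same ta01)
  (dotv_state_same tb01) del01 succ_a' succ_b'.
rewrite dotv_state norm_real normrX lecR => overlap_le.
have w_ge0 := arm_weight_ge0 j V.
have gamma_ge :
    1 - 2 * infidelity ta tb * arm_weight j V <= 1 - infidelity ta tb * arm_spread j V.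
  by have := arm_spread_le j V; have := infidelity_ge0 ta tb; nra.
have x_ge0 : 0 <= 2 * infidelity ta tb * arm_weight j V.
  by rewrite mulr_ge0 // mulr_ge0 ?infidelity_ge0.
by have := le_trans (exprn_norm_ge m gamma_ge x_ge0) overlap_le; lra.
Qed.
End ArmBound.

Lemma sum_arm_weight (R : realType) N (V : AR N -> AR N -> complex R) :
  \sum_j arm_weight j V = \sum_r \sum_s sqn (V s r).
Proof.
rewrite /arm_weight exchange_big; apply: eq_bigr => r _.
by rewrite pair_bigA; apply: eq_bigr => -[].
Qed.

Lemma pvec0_upd (R : realType) N (p : nat -> R) (j : 'I_N) :
  pvec N p 0 = upd j (fun i => p i.+1) (p j.+1).
Proof. by apply/funext => i; rewrite /pvec /upd /=; case: eqP => [-> |]. Qed.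

Lemma pvecS_upd (R : realType) N (p : nat -> R) (j : 'I_N) :
  pvec N p j.+1 = upd j (fun i => p i.+1) (p 0%N).
Proof. by apply/funext => i; rewrite /pvec /upd eqSS -val_eqE eq_sym. Qed.

Lemma arm_term_le (R : realFieldType) (eta eps m D w d1 dk : R) :
  0 < eta * (1 - eta) -> 0 <= m -> 0 <= w -> 0 < d1 -> 0 <= dk <= 2 * d1 ->
  eps <= m * (2 * D * w) -> D * (2 * (eta * (1 - eta))) <= dk ^+ 2 ->
  eta * (1 - eta) * eps * d1 ^-2 <= 4 * m * w.
Proof.
move=> eta_gt0 m_ge0 w_ge0 d1_gt0 /andP[dk_ge0 dk_le] eps_le D_le.
rewrite ler_pdivrMr ?exprn_gt0 //.
have dk2_le : dk ^+ 2 <= 4 * d1 ^+ 2.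
  by rewrite (_ : 4 * d1 ^+ 2 = (2 * d1) ^+ 2) ?lerXn2r ?nnegrE //; [lra | ring].
have := ler_wpM2l (ltW eta_gt0) eps_le; have := ler_wpM2l (mulr_ge0 m_ge0 w_ge0) D_le.
have := ler_wpM2l (mulr_ge0 m_ge0 w_ge0) dk2_le; nra.
Qed.

Lemma gap_bounds (R : realDomainType) N (p : nat -> R) k :
  p 2%N < p 1%N -> (forall i : nat, (2 <= i < N)%N -> p i.+1 <= p i) ->
  p 0%N - p 1%N = p 1%N - p 2%N -> (1 <= k < N)%N ->
  0 < p 1%N - p k.+1 /\ p 0%N - p k.+1 <= 2 * (p 1%N - p k.+1).
Proof.
move=> p21 p_mono p_gap /andP[k_ge1 k_lt].
suff : p k.+1 <= p 2%N by split; lra.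
elim: k k_ge1 k_lt => [|[|k] IHk] // _ k_lt.
by apply: le_trans (IHk _ (ltnW k_lt)); [apply: p_mono; rewrite k_lt |].
Qed.

Lemma corollary2_arm (R : realType) N eta del (p : nat -> R) m
    (V : AR N -> AR N -> complex R) (M : 'I_N -> op (complex R) {ffun 'I_m -> AR N})
    (i0 j : 'I_N) :
  val i0 = 0%N -> j != i0 -> 0 < eta < 1 / 2 -> 0 <= del < 1 / 2 ->
  (forall i : nat, (i <= N)%N -> eta <= p i <= 1 - eta) ->
  0 < p 1%N - p j.+1 -> 0 <= p 0%N - p j.+1 <= 2 * (p 1%N - p j.+1) ->
  \sum_r \sum_s sqn (V s r) = 1 -> povm M ->
  (forall k : 'I_N.+1,
     real_complex R (1 - del) <=
     \sum_(i : 'I_N | val i == (val k).-1)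
        trop (mulop (M i) (tensor_pow m (chan (pvec N p k) (gram V))))) ->
  eta * (1 - eta) * (1 - 2 * Num.sqrt (del * (1 - del))) * (p 1%N - p j.+1) ^-2
    <= 4 * m%:R * arm_weight j V.
Proof.
move=> i00 j_neq /andP[eta0 eta_half] /andP[del0 del_half] p_range d1_gt0 dk01 V1 povmM succ.
have p01 i : (i <= N)%N -> 0 <= p i <= 1 by move=> /p_range; lra.
have succ_a := succ ord0; have succ_b := succ (lift ord0 j).
have pred_a : [pred i : 'I_N | val i == (val (@ord0 N)).-1] =1 pred1 i0.
  by move=> i; rewrite /= -val_eqE i00.
have pred_b : [pred i : 'I_N | val i == (val (lift ord0 j)).-1] =1 pred1 j.
  by move=> i; rewrite /= -val_eqE.
rewrite (big_pred1 i0 pred_a) (pvec0_upd _ j) in succ_a.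
rewrite (big_pred1 j pred_b) lift0 pvecS_upd in succ_b.
have q01 (i : 'I_N) : 0 <= p i.+1 <= 1 by apply: p01; apply: ltn_ord.
apply: (arm_term_le _ _ _ d1_gt0 dk01 (arm_bound j_neq q01 _ _ V1 povmM _ succ_a succ_b)).
- by rewrite mulr_gt0 // subr_gt0; lra.
- exact: ler0n.
- exact: arm_weight_ge0.
- exact: p01 (ltn_ord j).
- exact: p01.
- by rewrite del0 ltW.
- by rewrite -sqrrN opprB infidelity_le ?p_range.
Qed.

Theorem corollary2 (R : realType) (N : nat) (eta delta : R) (p : nat -> R)
  (rho : op (complex R) (AR N)) (m : nat)
  (M : 'I_N -> op (complex R) {ffun 'I_m -> AR N}) :
  (2 <= N)%N ->
  0 < eta < 1 / 2 ->
  0 <= delta < 1 / 2 ->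
  p 1%N < p 0%N -> p 2%N < p 1%N ->
  (forall i : nat, (2 <= i < N)%N -> p i.+1 <= p i) ->
  (forall i : nat, (i <= N)%N -> eta <= p i <= 1 - eta) ->
  p 0%N - p 1%N = p 1%N - p 2%N ->
  density rho ->
  povm M ->
  (* for every k in {0..N}, the outcome is the best arm of p^k
     (paper's arm 1 if k = 0, arm k if k >= 1; i.e. our index k.-1)
     with probability >= 1 - delta *)
  (forall k : 'I_N.+1,
     real_complex R (1 - delta) <=
     \sum_(i : 'I_N | val i == (val k).-1)
        trop (mulop (M i) (tensor_pow m (chan (pvec N p k) rho)))) ->
  eta * (1 - eta) * (1 - 2 * Num.sqrt (delta * (1 - delta))) / 16
    * (\sum_(2 <= i < N.+1) (p 1%N - p i) ^-2) <= m%:R.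
Proof.
move=> N2 eta01 delta01 p10 p21 p_mono p_range p_gap [psd_rho tr_rho] povmM succ.
have [V rhoE] := psd_gram psd_rho; subst rho.
have V1 : \sum_r \sum_s sqn (V s r) = 1 by apply: complexI; rewrite -trop_gram tr_rho.
pose i0 : 'I_N := Ordinal (leq_trans (isT : 0 < 2)%N N2).
set c := eta * (1 - eta) * (1 - 2 * Num.sqrt (delta * (1 - delta))).
have arm (j : 'I_N) : j != i0 -> c * (p 1%N - p j.+1) ^-2 <= 4 * m%:R * arm_weight j V.
  move=> j_neq; have j_ge1 : (1 <= j < N)%N.
    by rewrite lt0n ltn_ord andbT; apply: contra j_neq => /eqP j0; apply/eqP/val_inj.
  have [d1_gt0 dk_le] := gap_bounds p21 p_mono p_gap j_ge1.
  apply: (corollary2_arm (i0 := i0)) => //; last exact: povmM.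
  by apply/andP; split; lra.
have weights : \sum_(j | j != i0) arm_weight j V <= 1.
  by rewrite -V1 -sum_arm_weight [X in _ <= X](bigD1 i0) //= lerDr arm_weight_ge0.
have -> : \sum_(2 <= i < N.+1) (p 1%N - p i) ^-2 = \sum_(j | j != i0) (p 1%N - p j.+1) ^-2.
  rewrite big_add1 big_geq_mkord /=; apply: eq_bigl => j.
  by rewrite lt0n; congr negb; apply/eqP/eqP => [j0 | ->] //; apply: val_inj.
rewrite mulrAC ler_pdivrMr // mulr_sumr.
apply: le_trans (ler_sum _ (fun j => arm j)) _.
rewrite -mulr_sumr; have m_ge0 : 0 <= m%:R :> R := ler0n _ m.
by have := ler_wpM2l (mulr_ge0 (ler0n _ 4) m_ge0) weights; nra.
Qed.
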